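(* Let $T$ be a rooted binary tree with black/white-coloured leaves and the induced node colouring and classification as described in the context. No SPR operation on $T$ belonging to the class $(\mathrm{W},\mathrm{r},\mathrm{B},\mathrm{b})$ produces a compatible tree.
   Context: All trees are rooted binary trees; every non-leaf node has exactly two children and every non-root node $n$ has a parent $\mathrm{pa}(n)$. A ''subtree'' always means a node together with all of its descendants. Colouring: each leaf is coloured black (B) or white (W); an internal node is black if both children are black, white if both children are white, and grey (G) otherwise. A subtree is black (resp. white) if all its nodes are black (resp. white); it is maximal if no strictly larger subtree containing it is black (resp. white). Classification: a black or white node is of type ''r'' if it is the root of a maximal subtree of its own colour, and of type ''b'' otherwise; all grey nodes are of type ''b'' by convention. A tree is compatible if it contains at most one maximal black subtree. SPR operation $(u,v)$ on $T$: $u$ is a non-root node, $v$ is a node with $v\notin\{u,\mathrm{pa}(u)\}$ and $v$ not a descendant of $u$; the subtree rooted at $u$ is pruned (the edge to $u$ is removed and $\mathrm{pa}(u)$ deleted, its other child taking its place), then regrafted by inserting a new node on the edge from $v$ to its parent (or as a new root above $v$ if $v$ is the root) whose two children are $v$ and $u$; colours of the resulting tree are recomputed by the same rule. The operation belongs to class $(x,y,z,w)$ where $x,z\in\{\mathrm{B},\mathrm{W},\mathrm{G}\}$ are the colours in $T$ of $u$ and $v$, and $y,w\in\{\mathrm{r},\mathrm{b}\}$ their classifications in $T$. *)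

From Stdlib Require Import List Bool.
Import ListNotations.

Inductive lcol := Black | White.

Inductive col := B | W | G.

Inductive tree := Leaf (c : lcol) | Node (l r : tree).

Fixpoint colour (t : tree) : col :=
  match t with
  | Leaf Black => B
  | Leaf White => W
  | Node l r =>
      match colour l, colour r with
      | B, B => B
      | W, W => W
      | _, _ => G
      end
  end.

(* A node of t is addressed by its path from the root (false = left child,
   true = right child). [sub t p] is the subtree rooted at node p, if any. *)
Fixpoint sub (t : tree) (p : list bool) : option tree :=
  match p with
  | [] => Some t
  | b :: p' =>
      match t with
      | Leaf _ => None
      | Node l r => sub (if b then r else l) p'
      end
  end.

Definition is_node (t : tree) (p : list bool) : Prop := sub t p <> None.

Definition node_col (t : tree) (p : list bool) (c : col) : Prop :=
  exists s, sub t p = Some s /\ colour s = c.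

(* Node p is of type "r": it is black or white, and no strictly larger subtree
   containing the subtree at p (i.e. a subtree rooted at a proper ancestor)
   has that colour, i.e. p is the root of a maximal subtree of its colour. *)
Definition type_r (t : tree) (p : list bool) : Prop :=
  exists c, c <> G /\ node_col t p c /\
    forall q w, p = q ++ w -> w <> [] -> ~ node_col t q c.

Definition max_black_root (t : tree) (p : list bool) : Prop :=
  node_col t p B /\ forall q w, p = q ++ w -> w <> [] -> ~ node_col t q B.

Definition compatible (t : tree) : Prop :=
  forall p q, max_black_root t p -> max_black_root t q -> p = q.

Definition subd (t : tree) (p : list bool) : tree :=
  match sub t p with Some s => s | None => t end.

Fixpoint replace (t : tree) (p : list bool) (s : tree) : tree :=
  match p with
  | [] => s
  | b :: p' =>
      match t with
      | Leaf _ => t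
      | Node l r => if b then Node l (replace r p' s) else Node (replace l p' s) r
      end
  end.

Fixpoint strip_prefix (q v : list bool) : option (list bool) :=
  match q, v with
  | [], _ => Some v
  | a :: q', b :: v' => if Bool.eqb a b then strip_prefix q' v' else None
  | _ :: _, [] => None
  end.

Definition parent (u : list bool) : list bool := removelast u.

Definition valid_spr (t : tree) (u v : list bool) : Prop :=
  is_node t u /\ u <> [] /\ is_node t v /\ v <> u /\ v <> parent u /\
  ~ (exists w, v = u ++ w).

(* The SPR operation (u, v): prune the subtree at u (its parent is deleted and
   its sibling takes the parent's place), then regraft it by inserting a new
   node on the edge above v (or a new root above v), with children v and u.
   [v'] is the address of the node v in the pruned tree. *)
Definition spr (t : tree) (u v : list bool) : tree :=
  let q := parent u in
  let b := last u false in
  let su := subd t u in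
  let sibp := q ++ [negb b] in
  let t' := replace t q (subd t sibp) in
  let v' := match strip_prefix sibp v with Some w => q ++ w | None => v end in
  replace t' v' (Node (subd t' v') su).

From Stdlib Require Import List Bool Classical.
Import ListNotations.

(* Since v is black but not the root of a maximal black subtree, its parent p
   is black, so the sibling s of v is black as well.  The white subtree at u is
   disjoint from the black subtree at p, so pruning u only relocates p, v and s.
   Regrafting u above v creates a grey node with children v and u, which makes
   its parent (the relocated p) grey too.  Then v, below a grey node, and s,
   below the grey p, are the roots of two distinct maximal black subtrees. *)

Definition prefix (p q : list bool) : Prop := exists z, q = p ++ z.

Definition incomparable (p q : list bool) : Prop := ~ prefix p q /\ ~ prefix q p.

Lemma prefix_app_r p q z : prefix p q -> prefix p (q ++ z).
Proof. intros [y ->]. exists (y ++ z). now rewrite <- app_assoc. Qed.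

Lemma incomparable_not_prefix_app p q x : incomparable p q -> ~ prefix (q ++ x) p.
Proof. intros [_ Hqp] [z ->]. apply Hqp. exists (x ++ z). now rewrite <- app_assoc. Qed.

Lemma incomparable_app p q z : incomparable p q -> incomparable (p ++ z) q.
Proof.
  intros [Hpq Hqp]. split.
  - intros [y Hy]. apply Hpq. exists (z ++ y). rewrite Hy. now rewrite <- app_assoc.
  - intros [y Hy]. apply app_eq_app in Hy as [l [[Hp _]|[Hq _]]].
    + apply Hqp. exists l. exact Hp.
    + apply Hpq. exists l. exact Hq.
Qed.

Lemma incomparable_siblings p x : incomparable (p ++ [negb x]) (p ++ [x]).
Proof.
  split; intros [z Hz]; rewrite <- app_assoc in Hz; apply app_inv_head in Hz;
    injection Hz; destruct x; discriminate.
Qed.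

Lemma incomparable_snoc_cases p q b :
  incomparable p (q ++ [b]) -> prefix (q ++ [negb b]) p \/ incomparable p q.
Proof.
  intros [Hpu Hup].
  destruct (classic (prefix q p)) as [[z ->]|Hqp].
  - left. destruct z as [|y z].
    + exfalso. apply Hpu. exists [b]. rewrite app_nil_r. reflexivity.
    + destruct (bool_dec y b) as [->|Hyb].
      * exfalso. apply Hup. exists z. now rewrite <- app_assoc.
      * exists z. replace y with (negb b) by (destruct y, b; simpl; congruence).
        now rewrite <- app_assoc.
  - right. split; [|exact Hqp]. intros Hpq. apply Hpu, prefix_app_r, Hpq.
Qed.

Lemma strip_prefix_app q w : strip_prefix q (q ++ w) = Some w.
Proof. induction q as [|a q IH]; simpl; [reflexivity|]. rewrite eqb_reflx. exact IH. Qed.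

Lemma strip_prefix_Some q : forall p w, strip_prefix q p = Some w -> p = q ++ w.
Proof.
  induction q as [|a q IH]; intros p w H; simpl in H.
  - injection H as ->. reflexivity.
  - destruct p as [|c p]; [discriminate|].
    destruct (Bool.eqb a c) eqn:E; [|discriminate].
    apply eqb_prop in E as ->. simpl. f_equal. exact (IH _ _ H).
Qed.

Lemma strip_prefix_None q p : ~ prefix q p -> strip_prefix q p = None.
Proof.
  intros H. destruct (strip_prefix q p) as [w|] eqn:E; [|reflexivity].
  exfalso. apply H. exists w. exact (strip_prefix_Some _ _ _ E).
Qed.

Lemma sub_nil t : sub t [] = Some t.
Proof. destruct t; reflexivity. Qed.

Lemma sub_app t p w :
  sub t (p ++ w) = match sub t p with Some s => sub s w | None => None end.
Proof.
  revert t; induction p as [|x p IH]; intros t; destruct t; simpl; auto.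
Qed.

Lemma is_node_prefix t p w : is_node t (p ++ w) -> is_node t p.
Proof. unfold is_node. rewrite sub_app. destruct (sub t p); congruence. Qed.

Lemma is_node_sibling t p x : is_node t (p ++ [x]) -> is_node t (p ++ [negb x]).
Proof.
  unfold is_node. rewrite !sub_app.
  destruct (sub t p) as [[c|l r]|]; destruct x; simpl; rewrite ?sub_nil; congruence.
Qed.

Lemma sub_replace_app q : forall t s w,
  is_node t q -> sub (replace t q s) (q ++ w) = sub s w.
Proof.
  induction q as [|x q IH]; intros t s w H; [destruct t; reflexivity|].
  destruct t as [c|l r]; [contradiction|].
  destruct x; simpl; apply IH; exact H.
Qed.

Lemma sub_replace_self t q s : is_node t q -> sub (replace t q s) q = Some s.
Proof.
  intros H. rewrite <- (app_nil_r q) at 2. rewrite sub_replace_app by exact H.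
  apply sub_nil.
Qed.

Lemma sub_replace_incomparable q : forall t s p,
  incomparable p q -> sub (replace t q s) p = sub t p.
Proof.
  induction q as [|x q IH]; intros t s p [Hpq Hqp].
  - exfalso. apply Hqp. exists p. reflexivity.
  - destruct p as [|y p].
    { exfalso. apply Hpq. exists (x :: q). reflexivity. }
    destruct t as [c|l r]; [reflexivity|].
    destruct x, y; simpl; try reflexivity; apply IH;
      split; intros [z Hz]; [apply Hpq|apply Hqp|apply Hpq|apply Hqp];
      exists z; simpl; congruence.
Qed.

Lemma colour_sub w : forall s s' c,
  colour s = c -> c <> G -> sub s w = Some s' -> colour s' = c.
Proof.
  induction w as [|x w IH]; intros s s' c Hc HG H.
  - rewrite sub_nil in H. injection H as <-. exact Hc.
  - destruct s as [k|l r]; [discriminate|].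
    assert (colour l = c /\ colour r = c) as [Hl Hr].
    { simpl in Hc. destruct (colour l), (colour r), c;
        try discriminate; try contradiction; split; reflexivity. }
    destruct x; [exact (IH _ _ _ Hr HG H)|exact (IH _ _ _ Hl HG H)].
Qed.

Lemma node_col_is_node t p c : node_col t p c -> is_node t p.
Proof. intros [s [Hs _]]. unfold is_node. congruence. Qed.

Lemma node_col_unique t p c c' : node_col t p c -> node_col t p c' -> c = c'.
Proof. intros [s [Hs <-]] [s' [Hs' <-]]. congruence. Qed.

Lemma node_col_app t p w c :
  node_col t p c -> c <> G -> is_node t (p ++ w) -> node_col t (p ++ w) c.
Proof.
  intros [s [Hs Hc]] HG Hw. unfold is_node in Hw. rewrite sub_app, Hs in Hw.
  destruct (sub s w) as [s'|] eqn:E; [|contradiction].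
  exists s'. rewrite sub_app, Hs. split; [exact E|exact (colour_sub _ _ _ _ Hc HG E)].
Qed.

Lemma node_col_parent_G t p x : node_col t (p ++ [x]) G -> node_col t p G.
Proof.
  intros [s [Hs Hc]]. rewrite sub_app in Hs.
  destruct (sub t p) as [[k|l r]|] eqn:E; try discriminate.
  exists (Node l r). split; [exact E|].
  destruct x; simpl in Hs; rewrite sub_nil in Hs; injection Hs as ->; simpl; rewrite Hc;
    [destruct (colour l)|destruct (colour r)]; reflexivity.
Qed.

Lemma max_black_root_snoc t p x :
  node_col t (p ++ [x]) B -> ~ node_col t p B -> max_black_root t (p ++ [x]).
Proof.
  intros Hb Hp. split; [exact Hb|].
  intros q w Heq Hw Hq. destruct (exists_last Hw) as [w' [y ->]].
  rewrite app_assoc in Heq. apply app_inj_tail in Heq as [-> _].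
  apply Hp, node_col_app; [exact Hq|discriminate|].
  exact (is_node_prefix _ _ _ (node_col_is_node _ _ _ Hb)).
Qed.

Lemma not_type_r_black_parent t v :
  node_col t v B -> ~ type_r t v -> exists p x, v = p ++ [x] /\ node_col t p B.
Proof.
  intros Hv Hr. apply NNPP. intros Hno. apply Hr.
  exists B. split; [discriminate|]. split; [exact Hv|].
  intros q w -> Hw Hq. apply Hno.
  destruct (exists_last Hw) as [w' [x ->]].
  exists (q ++ w'), x. split; [apply app_assoc|].
  apply node_col_app; [exact Hq|discriminate|].
  apply (is_node_prefix _ _ [x]). rewrite <- app_assoc.
  exact (node_col_is_node _ _ _ Hv).
Qed.

Lemma black_white_incomparable t p q :
  node_col t p B -> node_col t q W -> incomparable p q.
Proof.
  intros Hp Hq. split; intros [z ->].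
  - assert (Hb : node_col t (p ++ z) B)
      by (apply node_col_app; [exact Hp|discriminate|exact (node_col_is_node _ _ _ Hq)]).
    discriminate (node_col_unique _ _ _ _ Hb Hq).
  - assert (Hw : node_col t (q ++ z) W)
      by (apply node_col_app; [exact Hq|discriminate|exact (node_col_is_node _ _ _ Hp)]).
    discriminate (node_col_unique _ _ _ _ Hp Hw).
Qed.

Definition sibling (u : list bool) : list bool := parent u ++ [negb (last u false)].

Definition prune (t : tree) (u : list bool) : tree :=
  replace t (parent u) (subd t (sibling u)).

Definition relocate (u p : list bool) : list bool :=
  match strip_prefix (sibling u) p with Some w => parent u ++ w | None => p end.

Lemma spr_prune_relocate t u v :
  spr t u v = replace (prune t u) (relocate u v)
                (Node (subd (prune t u) (relocate u v)) (subd t u)).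
Proof. reflexivity. Qed.

Lemma parent_snoc q b : parent (q ++ [b]) = q.
Proof. apply removelast_last. Qed.

Lemma sibling_snoc q b : sibling (q ++ [b]) = q ++ [negb b].
Proof. unfold sibling. rewrite parent_snoc, last_last. reflexivity. Qed.

Lemma relocate_app q b p z : incomparable p (q ++ [b]) ->
  relocate (q ++ [b]) (p ++ z) = relocate (q ++ [b]) p ++ z.
Proof.
  intros Hp. unfold relocate. rewrite sibling_snoc, parent_snoc.
  destruct (incomparable_snoc_cases _ _ _ Hp) as [[w ->]|Hpq].
  - rewrite <- app_assoc, !strip_prefix_app. apply app_assoc.
  - pose proof (incomparable_app _ _ z Hpq) as Hpzq.
    rewrite !strip_prefix_None by (apply incomparable_not_prefix_app; assumption).
    reflexivity.
Qed.

Lemma sub_prune t q b p : is_node t (q ++ [b]) -> incomparable p (q ++ [b]) ->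
  sub (prune t (q ++ [b])) (relocate (q ++ [b]) p) = sub t p.
Proof.
  intros Hu Hp. unfold prune, relocate. rewrite sibling_snoc, parent_snoc.
  destruct (incomparable_snoc_cases _ _ _ Hp) as [[w ->]|Hpq].
  - rewrite strip_prefix_app, sub_replace_app by exact (is_node_prefix _ _ _ Hu).
    rewrite sub_app. unfold subd.
    destruct (sub t (q ++ [negb b])) eqn:E; [reflexivity|].
    exfalso. exact (is_node_sibling _ _ _ Hu E).
  - rewrite strip_prefix_None by exact (incomparable_not_prefix_app _ _ _ Hpq).
    exact (sub_replace_incomparable _ _ _ _ Hpq).
Qed.

Lemma sub_spr_graft t q b p x U V :
  sub t (q ++ [b]) = Some U -> sub t (p ++ [x]) = Some V -> incomparable p (q ++ [b]) ->
  sub (spr t (q ++ [b]) (p ++ [x])) (relocate (q ++ [b]) p ++ [x]) = Some (Node V U).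
Proof.
  intros HU HV Hp.
  assert (Hv : sub (prune t (q ++ [b])) (relocate (q ++ [b]) p ++ [x]) = Some V).
  { rewrite <- relocate_app by exact Hp.
    rewrite sub_prune; [exact HV|unfold is_node; congruence|apply incomparable_app, Hp]. }
  rewrite spr_prune_relocate, relocate_app by exact Hp.
  rewrite sub_replace_self by (unfold is_node; congruence).
  unfold subd. rewrite Hv, HU. reflexivity.
Qed.

Lemma sub_spr_sibling t q b p x :
  is_node t (q ++ [b]) -> incomparable p (q ++ [b]) ->
  sub (spr t (q ++ [b]) (p ++ [x])) (relocate (q ++ [b]) p ++ [negb x])
  = sub t (p ++ [negb x]).
Proof.
  intros Hu Hp.
  rewrite spr_prune_relocate, relocate_app, sub_replace_incomparable
    by (exact Hp || apply incomparable_siblings).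
  rewrite <- relocate_app by exact Hp.
  apply sub_prune; [exact Hu|apply incomparable_app, Hp].
Qed.

Theorem lemma3 (t : tree) (u v : list bool) :
  valid_spr t u v ->
  node_col t u W -> type_r t u ->
  node_col t v B -> ~ type_r t v ->
  ~ compatible (spr t u v).
Proof.
  intros (_ & Hune & _) HuW _ HvB Hnr Hcomp.
  destruct (exists_last Hune) as [q [b ->]].
  destruct (not_type_r_black_parent _ _ HvB Hnr) as (p & x & -> & HpB).
  pose proof (black_white_incomparable _ _ _ HpB HuW) as Hp.
  destruct HuW as [U [HU HcU]], HvB as [V [HV HcV]].
  pose proof (sub_spr_graft _ _ _ _ _ _ _ HU HV Hp) as Hgraft.
  assert (Hsib := sub_spr_sibling t q b p x ltac:(unfold is_node; congruence) Hp).
  set (p' := relocate (q ++ [b]) p) in *.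
  set (T := spr t (q ++ [b]) (p ++ [x])) in *.
  assert (HgraftG : node_col T (p' ++ [x]) G).
  { exists (Node V U). split; [exact Hgraft|]. simpl. rewrite HcV, HcU. reflexivity. }
  assert (HvB' : node_col T ((p' ++ [x]) ++ [false]) B).
  { exists V. rewrite sub_app, Hgraft. simpl. rewrite sub_nil. auto. }
  assert (HsB : node_col T (p' ++ [negb x]) B).
  { red. rewrite Hsib. apply node_col_app; [exact HpB|discriminate|].
    apply is_node_sibling. unfold is_node. congruence. }
  assert (Hmax_v : max_black_root T ((p' ++ [x]) ++ [false])).
  { apply max_black_root_snoc; [exact HvB'|].
    intros HB. discriminate (node_col_unique _ _ _ _ HB HgraftG). }
  assert (Hmax_s : max_black_root T (p' ++ [negb x])).
  { apply max_black_root_snoc; [exact HsB|].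
    intros HB. discriminate (node_col_unique _ _ _ _ HB (node_col_parent_G _ _ _ HgraftG)). }
  specialize (Hcomp _ _ Hmax_v Hmax_s).
  rewrite <- app_assoc in Hcomp. apply app_inv_head in Hcomp. discriminate.
Qed.
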